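(* Let $\Omega=\mathbb{T}^3$, $\delta>0$, $q\ge1$, $t>0$, and let $\mathbf{u}:[0,t]\times\Omega\to\mathbb{R}^3$ be sufficiently regular and periodic in $x$. Set $B=|\mathbb{D}(\mathbf{u})|^2+\delta^2$. Then $$\mathbb{J}:=-\int_0^t\int_\Omega\mathbf{u}_t\cdot\operatorname{div}\Big(B^{\frac{q-2}{2}}\mathbb{D}(\mathbf{u})\Big)_t\,dx\,ds\ \ge\ 0 .$$
   Context: $\mathbb{D}(\mathbf{u})=\frac12(\nabla\mathbf{u}+\nabla^t\mathbf{u})$ is the symmetric gradient, $|\mathbb{D}(\mathbf{u})|^2=\sum_{i,j}\mathbb{D}_{ij}(\mathbf{u})^2$, and the subscript $t$ denotes the time derivative. *)

From HB Require Import structures.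
From mathcomp Require Import all_boot all_order all_algebra.
From mathcomp Require Import all_classical all_reals all_analysis.
Set Implicit Arguments. Unset Strict Implicit. Unset Printing Implicit Defensive.
Import Order.TTheory GRing.Theory Num.Theory.
Import numFieldNormedType.Exports.
Local Open Scope classical_set_scope.
Local Open Scope ring_scope.

Section Defs.
Variable R : realType.

(* Space-time points are row vectors in R^4: coordinate 0 is time s,
   coordinates 1,2,3 are the space variables x_1,x_2,x_3. *)
Definition pt4 (s x1 x2 x3 : R) : 'rV[R]_4 :=
  \row_(k < 4) [:: s; x1; x2; x3]`_k.

Definition e4 (k : 'I_4) : 'rV[R]_4 := delta_mx 0 k.

Definition sp (i : 'I_3) : 'I_4 := lift ord0 i.

Definition dt (f : 'rV[R]_4 -> R) : 'rV[R]_4 -> R := 'D_(e4 ord0) f.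
Definition dx (j : 'I_3) (f : 'rV[R]_4 -> R) : 'rV[R]_4 -> R := 'D_(e4 (sp j)) f.

Fixpoint Dseq (vs : seq 'rV[R]_4) (f : 'rV[R]_4 -> R) : 'rV[R]_4 -> R :=
  if vs is v :: vs' then 'D_v (Dseq vs' f) else f.

Definition smooth (f : 'rV[R]_4 -> R) : Prop :=
  forall vs : seq 'rV[R]_4,
    continuous (Dseq vs f) /\ (forall (v x : 'rV[R]_4), derivable (Dseq vs f) x v).

(* periodic of period 1 in each space variable, i.e. a function on R x T^3 *)
Definition periodic_x (f : 'rV[R]_4 -> R) : Prop :=
  forall (j : 'I_3) (x : 'rV[R]_4), f (x + e4 (sp j)) = f x.

Definition symgrad (u : 'I_3 -> 'rV[R]_4 -> R) (i j : 'I_3) : 'rV[R]_4 -> R :=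
  fun x => (dx j (u i) x + dx i (u j) x) / 2.

Definition symgrad_norm2 (u : 'I_3 -> 'rV[R]_4 -> R) : 'rV[R]_4 -> R :=
  fun x => \sum_(i < 3) \sum_(j < 3) (symgrad u i j x) ^+ 2.

Definition Bfun (delta : R) (u : 'I_3 -> 'rV[R]_4 -> R) : 'rV[R]_4 -> R :=
  fun x => symgrad_norm2 u x + delta ^+ 2.

Definition stress (delta q : R) (u : 'I_3 -> 'rV[R]_4 -> R) (i j : 'I_3)
  : 'rV[R]_4 -> R :=
  fun x => (Bfun delta u x) `^ ((q - 2) / 2) * symgrad u i j x.

Definition div_stress (delta q : R) (u : 'I_3 -> 'rV[R]_4 -> R) (i : 'I_3)
  : 'rV[R]_4 -> R :=
  fun x => \sum_(j < 3) dx j (stress delta q u i j) x.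

Definition Jintegrand (delta q : R) (u : 'I_3 -> 'rV[R]_4 -> R)
  : 'rV[R]_4 -> R :=
  fun x => - \sum_(i < 3) dt (u i) x * dt (div_stress delta q u i) x.

(* J = int_0^t int_{T^3} integrand dx ds, with T^3 = [0,1]^3 (iterated
   Lebesgue integrals) *)
Definition Jval (delta q t : R) (u : 'I_3 -> 'rV[R]_4 -> R) : R :=
  \int[lebesgue_measure]_(s in `[0, t])
   \int[lebesgue_measure]_(x1 in `[0, 1])
    \int[lebesgue_measure]_(x2 in `[0, 1])
     \int[lebesgue_measure]_(x3 in `[0, 1])
       Jintegrand delta q u (pt4 s x1 x2 x3).

End Defs.

(* Write v = u_t and T_ij = (S_ij)_t for the rate of the stress
   S = B^r D(u), r = (q-2)/2.  By the product rule
     -v . (div S)_t = sum_ij T_ij d_j v_i - sum_j d_j (sum_i v_i T_ij),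
   and the divergence term integrates to zero over the torus by periodicity
   (fundamental theorem of calculus in x_j, after differentiating under the
   remaining integrals).  T is symmetric, so sum_ij T_ij d_j v_i = T : b with
   b = D(u)_t; writing a = D(u), one gets B_t = 2 a : b and
     T : b = B^(r-1) (B |b|^2 + 2r (a : b)^2) >= B^(r-1) (B - |a|^2) |b|^2 >= 0
   by Cauchy-Schwarz, since 2r >= -1 and |a|^2 <= B. *)

From HB Require Import structures.
From mathcomp Require Import all_boot all_order all_algebra.
From mathcomp Require Import all_classical all_reals all_analysis.
From mathcomp Require Import ring lra.
Set Implicit Arguments. Unset Strict Implicit. Unset Printing Implicit Defensive.
Import Order.TTheory GRing.Theory Num.Theory.
Import numFieldNormedType.Exports.
Local Open Scope classical_set_scope.
Local Open Scope ring_scope.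

Section DirectionalDerivatives.
Variables (R : realType) (V : normedModType R).

Lemma derive_line (g : V -> R) (v x : V) :
  'D_v g x = 'D_1 (fun t : R => g (t *: v + x)) 0.
Proof.
have E : (fun h : R => h^-1 *: ((g \o shift x) (h *: v) - g x)) =
    (fun h : R => h^-1 *: (((fun t : R => g (t *: v + x)) \o shift 0) (h *: 1)
       - (fun t : R => g (t *: v + x)) 0)).
  by apply/funext => h /=; rewrite addr0 scale0r add0r [_%:A]mulr1.
by rewrite /derive E.
Qed.

Lemma is_derive_line (g : V -> R) (v p : V) (y : R) :
  derivable g (y *: v + p) v ->
  is_derive y 1 (fun t : R => g (t *: v + p)) ('D_v g (y *: v + p)).
Proof.
have E : (fun h : R => h^-1 *: (((fun t : R => g (t *: v + p)) \o shift y) (h *: 1)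
     - (fun t : R => g (t *: v + p)) y)) =
  (fun h : R => h^-1 *: ((g \o shift (y *: v + p)) (h *: v) - g (y *: v + p))).
  by apply/funext => h /=; rewrite [_%:A]mulr1 scalerDl addrA.
move=> dg; split; first by rewrite /derivable E.
by rewrite /derive E.
Qed.

Lemma is_derive_lineP (g : V -> R) (v x : V) (dg : R) :
  is_derive x v g dg <-> is_derive (0 : R) 1 (fun t : R => g (t *: v + x)) dg.
Proof.
split=> -[dgx <-].
  by split; [exact: (derivable1P g x v).1 | rewrite derive_line].
by split; [exact: (derivable1P g x v).2 | rewrite derive_line].
Qed.

Lemma is_derive_comp1 (phi dphi : R -> R) (g : V -> R) x v :
  derivable g x v -> is_derive (g x) 1 phi (dphi (g x)) ->
  is_derive x v (fun y => phi (g y)) (dphi (g x) * 'D_v g x).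
Proof.
move=> dg Dphi; apply/is_derive_lineP.
have Dl : is_derive (0 : R) 1 (fun t : R => g (t *: v + x)) ('D_v g x).
  exact/is_derive_lineP/derivableP.
have gl0 : g (0 *: v + x) = g x by rewrite scale0r add0r.
rewrite -gl0 in Dphi *; exact: is_derive1_comp Dphi Dl.
Qed.

Lemma is_derive_sum_apply n (F : 'I_n -> V -> R) (dF : 'I_n -> R) x v :
  (forall i, is_derive x v (F i) (dF i)) ->
  is_derive x v (fun y => \sum_(i < n) F i y) (\sum_(i < n) dF i).
Proof. by move=> DF; rewrite -fct_sumE; exact: is_derive_sum. Qed.

Lemma is_derive_sqr (f : V -> R) x v : derivable f x v ->
  is_derive x v (fun y => f y ^+ 2) (2 * f x * 'D_v f x).
Proof.
move=> df; have -> : 2 * f x * 'D_v f x = f x *: 'D_v f x + f x *: 'D_v f x.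
  by rewrite /GRing.scale /=; ring.
exact: is_deriveM (derivableP df) (derivableP df).
Qed.

Lemma continuous_sum n (F : 'I_n -> V -> R) :
  (forall i, continuous (F i)) -> continuous (fun x => \sum_(i < n) F i x).
Proof.
move=> cF; rewrite (_ : (fun x => _) = \sum_(i < n) F i); last first.
  by apply/funext => x; rewrite fct_sumE.
apply: (big_ind (fun f : V -> R => continuous f)) => //; first exact: cst_continuous.
by move=> f g cf cg x; exact: continuousD (cf x) (cg x).
Qed.

End DirectionalDerivatives.

Section SmoothAlong.
Variables (R : realType) (V : normedModType R) (I : Type) (dir : I -> V).

Fixpoint Ck (n : nat) (f : V -> R) : Prop :=
  if n is m.+1 then continuous f /\
    forall k, (forall x, derivable f x (dir k)) /\ Ck m ('D_(dir k) f)
  else continuous f.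

Lemma Ck_cont n f : Ck n f -> continuous f.
Proof. by case: n => //= n []. Qed.

Lemma Ck_derivable n f k x : Ck n.+1 f -> derivable f x (dir k).
Proof. by move=> [_ /(_ k) []]. Qed.

Lemma Ck_D n f k : Ck n.+1 f -> Ck n ('D_(dir k) f).
Proof. by move=> [_ /(_ k) []]. Qed.

Lemma CkS n f : Ck n.+1 f -> Ck n f.
Proof.
elim: n f => [|n IH] f [cf Hf] //; split=> // k.
by have [df Cf] := Hf k; split=> //; exact: IH.
Qed.

Lemma Ck_cst n (c : R) : Ck n (fun _ => c).
Proof.
elim: n c => [|n IH] c; first exact: cst_continuous.
split=> [|k]; first exact: cst_continuous.
split=> [x|]; first exact: derivable_cst.
have -> : 'D_(dir k) (fun _ => c) = fun _ => 0.
  by apply/funext => x; exact: derive_cst.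
exact: IH.
Qed.

Lemma Ck_add n (f g : V -> R) : Ck n f -> Ck n g -> Ck n (fun x => f x + g x).
Proof.
elim: n f g => [|n IH] f g; first by move=> cf cg x; exact: (continuousD (cf x) (cg x)).
move=> [cf Hf] [cg Hg]; split=> [x|k]; first exact: (continuousD (cf x) (cg x)).
have [df Cf] := Hf k; have [dg Cg] := Hg k; split=> [x|]; first exact: derivableD.
have -> : 'D_(dir k) (fun x => f x + g x) =
    fun x => 'D_(dir k) f x + 'D_(dir k) g x.
  by apply/funext => x; exact: deriveD.
exact: IH Cf Cg.
Qed.

Lemma Ck_mul n (f g : V -> R) : Ck n f -> Ck n g -> Ck n (fun x => f x * g x).
Proof.
elim: n f g => [|n IH] f g; first by move=> cf cg x; exact: (continuousM (cf x) (cg x)).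
move=> Cf Cg; have [cf Hf] := Cf; have [cg Hg] := Cg.
split=> [x|k]; first exact: (continuousM (cf x) (cg x)).
have [df Cdf] := Hf k; have [dg Cdg] := Hg k; split=> [x|]; first exact: derivableM.
have -> : 'D_(dir k) (fun x => f x * g x) =
    fun x => f x * 'D_(dir k) g x + g x * 'D_(dir k) f x.
  by apply/funext => x; exact: deriveM.
by apply: Ck_add; apply: IH => //; exact: CkS.
Qed.

Lemma Ck_sum n m (F : 'I_m -> V -> R) :
  (forall i, Ck n (F i)) -> Ck n (fun x => \sum_(i < m) F i x).
Proof.
move=> CF; rewrite (_ : (fun x => _) = \sum_(i < m) F i); last first.
  by apply/funext => x; rewrite fct_sumE.
apply: (big_ind (Ck n)) => //; first exact: Ck_cst.
by move=> f g; exact: Ck_add.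
Qed.

Lemma Ck_powR n (g : V -> R) (r : R) : (forall x, 0 < g x) -> Ck n g ->
  Ck n (fun x => g x `^ r).
Proof.
move=> gpos; elim: n r => [|n IH] r Cg.
  move=> x; have cp : {for g x, continuous (fun y : R => y `^ r)}.
    by apply/differentiable_continuous/derivable1_diffP/derivable_powR;
      rewrite in_itv /= gpos.
  exact: (continuous_comp (Cg x) cp).
have D k x : is_derive x (dir k) (fun y => g y `^ r)
    (r * g x `^ (r - 1) * 'D_(dir k) g x).
  apply: (is_derive_comp1 (phi := fun y => y `^ r) (dphi := fun y => r * y `^ (r - 1))).
    exact: Ck_derivable Cg.
  exact: is_derive1_powR.
split=> [|k]; first by apply: Ck_cont (IH r (CkS Cg)).
split=> [x|]; first exact: (D k x).(ex_derive).
have -> : 'D_(dir k) (fun x => g x `^ r) =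
    fun x => r * g x `^ (r - 1) * 'D_(dir k) g x.
  by apply/funext => x; exact: (D k x).(derive_val).
apply: Ck_mul; last exact: Ck_D Cg.
by apply: Ck_mul; [exact: Ck_cst | exact: IH (CkS Cg)].
Qed.

End SmoothAlong.

Section SymmetryOfSecondDerivatives.
Variables (R : realType) (V : normedModType R).

Lemma second_difference_mvt (f : V -> R) (va vb x : V) (h : R) : 0 < h ->
  (forall y, derivable f y va) -> (forall y, derivable ('D_va f) y vb) ->
  exists c d, [/\ 0 < c < h, 0 < d < h &
    f (h *: va + (h *: vb + x)) - f (h *: va + x) - (f (h *: vb + x) - f x)
    = h * h * 'D_vb ('D_va f) (d *: vb + (c *: va + x))].
Proof.
move=> h0 df dg.
pose psi s := f (s *: va + (h *: vb + x)) - f (s *: va + x).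
have Dpsi (s : R) : is_derive s 1 psi
    ('D_va f (s *: va + (h *: vb + x)) - 'D_va f (s *: va + x)).
  exact: is_deriveB (is_derive_line (df _)) (is_derive_line (df _)).
have cpsi : {within `[0, h], continuous psi}.
  by apply: derivable_within_continuous => s _; exact: (Dpsi s).(ex_derive).
have [c /[!in_itv] /= /andP[c0 ch] Ec] := MVT h0 (fun s _ => Dpsi s) cpsi.
pose chi y := 'D_va f (y *: vb + (c *: va + x)).
have Dchi (y : R) : is_derive y 1 chi ('D_vb ('D_va f) (y *: vb + (c *: va + x))).
  exact: is_derive_line (dg _).
have cchi : {within `[0, h], continuous chi}.
  by apply: derivable_within_continuous => s _; exact: (Dchi s).(ex_derive).
have [d /[!in_itv] /= /andP[d0 dh] Ed] := MVT h0 (fun s _ => Dchi s) cchi.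
exists c, d; split; rewrite ?c0 ?ch ?d0 ?dh //.
have -> : f (h *: va + (h *: vb + x)) - f (h *: va + x) - (f (h *: vb + x) - f x)
    = psi h - psi 0 by rewrite /psi !scale0r !add0r.
rewrite Ec subr0.
have -> : 'D_va f (c *: va + (h *: vb + x)) - 'D_va f (c *: va + x) = chi h - chi 0.
  by rewrite /chi scale0r add0r addrCA.
by rewrite Ed subr0; ring.
Qed.

Lemma eq_of_close_eq (G1 G2 : V -> R) (x : V) :
  {for x, continuous G1} -> {for x, continuous G2} ->
  (forall r, 0 < r -> exists y1 y2, [/\ ball x r y1, ball x r y2 & G1 y1 = G2 y2]) ->
  G1 x = G2 x.
Proof.
move=> c1 c2 close; apply/eqP; rewrite -subr_eq0 -normr_le0.
apply/ler_addgt0Pr => e e0; rewrite add0r.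
have e2 : 0 < e / 2 by rewrite divr_gt0.
have /cvgrPdist_lt /(_ _ e2) /nbhs_ballP [r1 r10 B1] := c1.
have /cvgrPdist_lt /(_ _ e2) /nbhs_ballP [r2 r20 B2] := c2.
have r0 : 0 < Num.min r1 r2 by rewrite lt_min r10 r20.
have [y1 [y2 [b1 b2 E]]] := close _ r0.
have m1 : Num.min r1 r2 <= r1 by rewrite ge_min lexx.
have m2 : Num.min r1 r2 <= r2 by rewrite ge_min lexx orbT.
have n1 := B1 _ (le_ball m1 b1).
have n2 := B2 _ (le_ball m2 b2).
have -> : G1 x - G2 x = (G1 x - G1 y1) + (G2 y2 - G2 x) by rewrite E addrA subrK.
rewrite distrC in n2; apply: le_trans (ler_normD _ _) _.
by rewrite [e]splitr; apply: lerD; exact: ltW.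
Qed.

Lemma derive_comm (f : V -> R) (va vb : V) :
  (forall y, derivable f y va) -> (forall y, derivable f y vb) ->
  (forall y, derivable ('D_va f) y vb) -> (forall y, derivable ('D_vb f) y va) ->
  continuous ('D_vb ('D_va f)) -> continuous ('D_va ('D_vb f)) ->
  'D_vb ('D_va f) = 'D_va ('D_vb f).
Proof.
move=> dfa dfb dga dgb c1 c2; apply/funext => x.
(* The second difference with step h is h^2 times either mixed derivative,
   taken at points within h (|va| + |vb|) of x. *)
apply: eq_of_close_eq (c1 x) (c2 x) _ => r r0.
pose K := `|va| + `|vb| + 1.
have K0 : 0 < K by rewrite ltr_wpDl // addr_ge0.
pose h := r / (2 * K).
have h0 : 0 < h by rewrite divr_gt0 // mulr_gt0.
have hK : h * K < r.
  have -> : h * K = r / 2 by rewrite /h; field; rewrite gt_eqF.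
  lra.
have near (c d : R) (w1 w2 : V) : 0 < c < h -> 0 < d < h ->
    `|w1| + `|w2| <= K -> ball x r (d *: w2 + (c *: w1 + x)).
  move=> /andP[c0 ch] /andP[d0 dh] wK; rewrite -ball_normE /=.
  rewrite addrA opprD addrCA subrr addr0 normrN.
  rewrite (le_lt_trans (ler_normD _ _)) // !normrZ !gtr0_norm //.
  apply: le_lt_trans hK; apply: (le_trans (y := h * `|w2| + h * `|w1|)).
    by apply: lerD; apply: ler_wpM2r => //; exact: ltW.
  by rewrite -mulrDr addrC; apply: ler_wpM2l => //; exact: ltW.
have [c [d [ch dh E]]] := second_difference_mvt x h0 dfa dga.
have [c' [d' [ch' dh' E']]] := second_difference_mvt x h0 dfb dgb.
exists (d *: vb + (c *: va + x)), (d' *: va + (c' *: vb + x)); split.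
- by apply: near; rewrite // lerDl.
- by apply: near; rewrite // addrC lerDl.
- have swap (a1 a2 a3 a4 : R) : a1 - a2 - (a3 - a4) = a1 - a3 - (a2 - a4).
    by ring.
  have hh0 : h * h != 0 by rewrite mulf_neq0 // gt_eqF.
  apply: (mulfI hh0); apply: etrans (esym E) (etrans _ E').
  by rewrite swap [h *: va + (h *: vb + x)]addrCA.
Qed.

End SymmetryOfSecondDerivatives.

Lemma Ck_derive_comm (R : realType) (V : normedModType R) (I : Type)
    (dir : I -> V) (f : V -> R) (a b : I) :
  Ck dir 2 f -> 'D_(dir b) ('D_(dir a) f) = 'D_(dir a) ('D_(dir b) f).
Proof.
move=> Cf; have Cf1 k : Ck dir 1 ('D_(dir k) f) := Ck_D k Cf.
apply: derive_comm => [y|y|y|y||].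
- exact: Ck_derivable Cf.
- exact: Ck_derivable Cf.
- exact: Ck_derivable (Cf1 a).
- exact: Ck_derivable (Cf1 b).
- exact: Ck_cont (Ck_D b (Cf1 a)).
- exact: Ck_cont (Ck_D a (Cf1 b)).
Qed.

(* Parameters range over ]-1, 2[, an open neighbourhood of [0, 1], as the
   lemmas on integrals depending on a parameter need an open interval. *)
Section UnitIntervalIntegrals.
Variable R : realType.
Local Notation mu := (@lebesgue_measure R).

Lemma integrable01_within (f : R -> R) : {within `[0, 1], continuous f} ->
  mu.-integrable `[0, 1] (EFin \o f).
Proof.
by move=> cf; apply: continuous_compact_integrable => //; exact: segment_compact.
Qed.

Lemma integrable01 (f : R -> R) : continuous f ->
  mu.-integrable `[0, 1] (EFin \o f).
Proof. by move=> cf; apply: integrable01_within; exact: continuous_subspaceT. Qed.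

Lemma near01_within_continuous (f : R -> R) :
  (forall x, -1 < x < 2 -> {for x, continuous f}) -> {within `[0, 1], continuous f}.
Proof.
move=> cf; apply: continuous_in_subspaceT => x.
rewrite inE /= in_itv /= => /andP[x0 x1].
by apply: cf; apply/andP; split; lra.
Qed.

Lemma integral01_cst (c : R) : \int[mu]_(x in `[0, 1]) c = c.
Proof.
have mu1 : fine (mu `[0, 1]%classic) = 1.
  by rewrite lebesgue_measure_itv /= lte_fin ltr01 /= subr0.
by rewrite Rintegral_cst ?mu1 ?mulr1 //; exact: measurable_itv.
Qed.

Lemma integral01_norm_le (f : R -> R) M : mu.-integrable `[0, 1] (EFin \o f) ->
  (forall y, 0 <= y <= 1 -> `|f y| <= M) ->
  `|\int[mu]_(y in `[0, 1]) f y| <= M.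
Proof.
move=> intf fM.
have icM (c : R) : mu.-integrable `[0, 1] (EFin \o (fun _ : R => c)).
  exact/integrable01/cst_continuous.
have fM' y : `[0, 1]%classic y -> - M <= f y <= M.
  by rewrite /= in_itv /= -ler_norml => /fM.
rewrite ler_norml; apply/andP; split.
  rewrite -[X in X <= _]integral01_cst; apply: le_Rintegral => // y.
  by case/fM'/andP.
rewrite -[X in _ <= X]integral01_cst; apply: le_Rintegral => // y.
by case/fM'/andP.
Qed.

Lemma param_integral_continuous (f : R -> R -> R) (M : R) :
  (forall x, -1 < x < 2 -> mu.-integrable `[0, 1] (EFin \o f x)) ->
  (forall x y, -1 < x < 2 -> 0 <= y <= 1 -> {for x, continuous (f ^~ y)}) ->
  (forall x y, -1 < x < 2 -> 0 <= y <= 1 -> `|f x y| <= M) ->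
  forall x, -1 < x < 2 ->
    {for x, continuous (fun x => \int[mu]_(y in `[0, 1]) f x y)}.
Proof.
move=> intf cf fM x x12.
apply: (@continuity_under_integral R _ _ mu f `[0, 1] (measurable_itv _) (-1) 2
  _ _ (cst M)).
- by move=> z; rewrite /= in_itv /=; exact: intf.
- apply: aeW => y; rewrite /= in_itv /= => y01 z; rewrite inE /= in_itv /= => z12.
  exact: cf.
- exact/integrable01/cst_continuous.
- move=> z; rewrite /= in_itv /= => z12; apply: aeW => y; rewrite /= in_itv /= => y01.
  exact: fM.
- by rewrite inE /= in_itv.
Qed.

Lemma param_integral_derive (f df : R -> R -> R) (M : R) :
  (forall x, -1 < x < 2 -> mu.-integrable `[0, 1] (EFin \o f x)) ->
  (forall x y : R, -1 < x < 2 -> 0 <= y <= 1 -> is_derive x 1 (f ^~ y) (df x y)) ->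
  (forall x y, -1 < x < 2 -> 0 <= y <= 1 -> `|df x y| <= M) ->
  forall x : R, -1 < x < 2 ->
    is_derive x 1 (fun x => \int[mu]_(y in `[0, 1]) f x y)
                  (\int[mu]_(y in `[0, 1]) df x y).
Proof.
move=> intf Df dfM x x12.
have M0 : 0 <= M.
  by apply: le_trans (dfM 0 0 _ _); rewrite ?normr_ge0 //; apply/andP; split; lra.
have Ix : `]-1, 2[%classic x by rewrite /= in_itv /=.
have H1 z : `]-1, 2[%classic z -> mu.-integrable `[0, 1] (EFin \o f z).
  by rewrite /= in_itv /=; exact: intf.
have H2 z y : `]-1, 2[%classic z -> `[0, 1]%classic y -> derivable (f ^~ y) z 1.
  by rewrite /= !in_itv /= => z12 y01; exact: (Df z y z12 y01).(ex_derive).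
have H3 z y : `]-1, 2[%classic z -> `[0, 1]%classic y ->
    `|partial1of2 f z y| <= cst M y.
  rewrite /= !in_itv /= => z12 y01.
  by rewrite /partial1of2 derive1E (Df z y z12 y01).(derive_val); exact: dfM.
have H4 : mu.-integrable `[0, 1] (EFin \o cst M).
  exact/integrable01/cst_continuous.
have -> : \int[mu]_(y in `[0, 1]) df x y =
    \int[mu]_(y in `[0, 1]) partial1of2 f ^~ y x.
  apply: eq_Rintegral => y; rewrite inE /= in_itv /= => y01.
  by rewrite /partial1of2 derive1E (Df x y x12 y01).(derive_val).
split.
  exact: (derivable_under_integral _ Ix H1 H2 (fun=> M0) H4 H3).
rewrite -derive1E.
exact: (differentiation_under_integral _ Ix H1 H2 (fun=> M0) H4 H3).
Qed.

Lemma integral01_derive_eq0 (F f : R -> R) :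
  (forall x : R, -1 < x < 2 -> is_derive x 1 F (f x)) ->
  {within `[0, 1], continuous f} -> F 1 = F 0 ->
  \int[mu]_(x in `[0, 1]) f x = 0.
Proof.
move=> DF cf F10.
have cF x : -1 < x < 2 -> {for x, continuous F}.
  by move=> x12; apply/differentiable_continuous/derivable1_diffP;
    exact: (DF x x12).(ex_derive).
have in12 (x : R) : 0 <= x <= 1 -> -1 < x < 2.
  by move=> /andP[x0 x1]; apply/andP; split; lra.
rewrite /Rintegral (@continuous_FTC2 R f F 0 1) //.
- by rewrite -EFinB /= F10 subrr.
- split.
  + by move=> x /[!in_itv] /= /andP[x0 x1]; apply: (DF x _).(ex_derive); apply: in12;
      rewrite ltW ?ltW.
  + by apply: cvg_at_right_filter; apply: cF; apply: in12; rewrite lexx ler01.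
  + by apply: cvg_at_left_filter; apply: cF; apply: in12; rewrite lexx ler01.
- move=> x /[!in_itv] /= /andP[x0 x1].
  by rewrite derive1E; apply: (DF x _).(derive_val); apply: in12; rewrite !ltW.
Qed.

End UnitIntervalIntegrals.

Section CoordinateLines.
Variable R : realType.
Local Notation V := 'rV[R]_4.

Lemma pt4_line1 (s y x2 x3 : R) : pt4 s y x2 x3 = y *: e4 R (sp 0) + pt4 s 0 x2 x3.
Proof. by apply/rowP => k; rewrite !mxE; case: k => [[|[|[|[|m]]]] Hm] //=; ring. Qed.

Lemma pt4_line2 (s x1 y x3 : R) : pt4 s x1 y x3 = y *: e4 R (sp 1) + pt4 s x1 0 x3.
Proof. by apply/rowP => k; rewrite !mxE; case: k => [[|[|[|[|m]]]] Hm] //=; ring. Qed.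

Lemma pt4_line3 (s x1 x2 y : R) : pt4 s x1 x2 y = y *: e4 R (sp 2) + pt4 s x1 x2 0.
Proof. by apply/rowP => k; rewrite !mxE; case: k => [[|[|[|[|m]]]] Hm] //=; ring. Qed.

Lemma continuous_line (g : V -> R) (v p : V) : continuous g ->
  continuous (fun t : R => g (t *: v + p)).
Proof.
move=> cg t; apply: continuous_comp; last exact: cg.
apply: (@continuousD _ _ _ (fun t : R => t *: v) (fun=> p)).
  exact: scalel_continuous.
exact: cst_continuous.
Qed.

Lemma continuous_pt4_1 (g : V -> R) s x2 x3 : continuous g ->
  continuous (fun y => g (pt4 s y x2 x3)).
Proof.
move=> cg; have -> : (fun y => g (pt4 s y x2 x3)) =
    (fun y => g (y *: e4 R (sp 0) + pt4 s 0 x2 x3)).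
  by apply/funext => y; rewrite -pt4_line1.
exact: continuous_line.
Qed.

Lemma continuous_pt4_2 (g : V -> R) s x1 x3 : continuous g ->
  continuous (fun y => g (pt4 s x1 y x3)).
Proof.
move=> cg; have -> : (fun y => g (pt4 s x1 y x3)) =
    (fun y => g (y *: e4 R (sp 1) + pt4 s x1 0 x3)).
  by apply/funext => y; rewrite -pt4_line2.
exact: continuous_line.
Qed.

Lemma continuous_pt4_3 (g : V -> R) s x1 x2 : continuous g ->
  continuous (fun y => g (pt4 s x1 x2 y)).
Proof.
move=> cg; have -> : (fun y => g (pt4 s x1 x2 y)) =
    (fun y => g (y *: e4 R (sp 2) + pt4 s x1 x2 0)).
  by apply/funext => y; rewrite -pt4_line3.
exact: continuous_line.
Qed.

Lemma is_derive_pt4_1 (F : V -> R) s x2 x3 (y : R) :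
  (forall x, derivable F x (e4 R (sp 0))) ->
  is_derive y 1 (fun y => F (pt4 s y x2 x3)) ('D_(e4 R (sp 0)) F (pt4 s y x2 x3)).
Proof.
move=> dF; have := is_derive_line (dF (y *: e4 R (sp 0) + pt4 s 0 x2 x3)).
have -> : (fun t : R => F (t *: e4 R (sp 0) + pt4 s 0 x2 x3)) =
    (fun y => F (pt4 s y x2 x3)) by apply/funext => t; rewrite -pt4_line1.
by rewrite -pt4_line1.
Qed.

Lemma is_derive_pt4_2 (F : V -> R) s x1 x3 (y : R) :
  (forall x, derivable F x (e4 R (sp 1))) ->
  is_derive y 1 (fun y => F (pt4 s x1 y x3)) ('D_(e4 R (sp 1)) F (pt4 s x1 y x3)).
Proof.
move=> dF; have := is_derive_line (dF (y *: e4 R (sp 1) + pt4 s x1 0 x3)).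
have -> : (fun t : R => F (t *: e4 R (sp 1) + pt4 s x1 0 x3)) =
    (fun y => F (pt4 s x1 y x3)) by apply/funext => t; rewrite -pt4_line2.
by rewrite -pt4_line2.
Qed.

Lemma is_derive_pt4_3 (F : V -> R) s x1 x2 (y : R) :
  (forall x, derivable F x (e4 R (sp 2))) ->
  is_derive y 1 (fun y => F (pt4 s x1 x2 y)) ('D_(e4 R (sp 2)) F (pt4 s x1 x2 y)).
Proof.
move=> dF; have := is_derive_line (dF (y *: e4 R (sp 2) + pt4 s x1 x2 0)).
have -> : (fun t : R => F (t *: e4 R (sp 2) + pt4 s x1 x2 0)) =
    (fun y => F (pt4 s x1 x2 y)) by apply/funext => t; rewrite -pt4_line3.
by rewrite -pt4_line3.
Qed.

Lemma continuous_pt4 (s : R) :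
  continuous (fun z : R * (R * R) => pt4 s z.1 z.2.1 z.2.2).
Proof.
have -> : (fun z : R * (R * R) => pt4 s z.1 z.2.1 z.2.2) =
    (fun z => z.1 *: e4 R (sp 0) + (z.2.1 *: e4 R (sp 1) +
       (z.2.2 *: e4 R (sp 2) + s *: e4 R ord0))).
  apply/funext => z; apply/rowP => k; rewrite !mxE.
  by case: k => [[|[|[|[|m]]]] Hm] //=; ring.
have cZ (f : R * (R * R) -> R) (v : V) : continuous f ->
    continuous (fun z => f z *: v).
  move=> cf z; apply: (@continuous_comp _ _ _ f (fun k : R => k *: v)).
    exact: cf.
  exact: scalel_continuous.
have cD (f1 f2 : R * (R * R) -> V) : continuous f1 -> continuous f2 ->
    continuous (fun z => f1 z + f2 z).
  by move=> cf1 cf2 z; exact: continuousD (cf1 z) (cf2 z).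
have c2 : continuous (fun z : R * (R * R) => z.2) by move=> z; exact: cvg_snd.
apply: (cD); first by apply: (cZ) => z; exact: cvg_fst.
apply: (cD); first by apply: (cZ) => z; apply: continuous_comp (c2 z) _; exact: cvg_fst.
apply: (cD); first by apply: (cZ) => z; apply: continuous_comp (c2 z) _; exact: cvg_snd.
exact: cst_continuous.
Qed.

Lemma continuous_pt4_bounded (g : V -> R) (s : R) : continuous g ->
  exists M, forall x1 x2 x3, -1 <= x1 <= 2 -> -1 <= x2 <= 2 -> -1 <= x3 <= 2 ->
    `|g (pt4 s x1 x2 x3)| <= M.
Proof.
move=> cg; pose I : set R := `[-1, 2]%classic.
have cA : compact (I `*` (I `*` I)).
  by apply: compact_setX; last apply: compact_setX; exact: segment_compact.
have cgp : {within I `*` (I `*` I),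
    continuous (fun z : R * (R * R) => g (pt4 s z.1 z.2.1 z.2.2))}.
  apply: continuous_subspaceT => z.
  by apply: continuous_comp; [exact: continuous_pt4 | exact: cg].
have /compact_bounded [M [_ HM]] := continuous_compact cgp cA.
exists (M + 1) => x1 x2 x3 h1 h2 h3.
by apply: (HM (M + 1)); [rewrite ltrDl | exists (x1, (x2, x3))].
Qed.

End CoordinateLines.

Section TorusIntegral.
Variable R : realType.
Local Notation V := 'rV[R]_4.
Local Notation mu := (@lebesgue_measure R).

Definition torus_int_x3 (g : V -> R) (s x1 x2 : R) : R :=
  \int[mu]_(x3 in `[0, 1]) g (pt4 s x1 x2 x3).
Definition torus_int_x23 (g : V -> R) (s x1 : R) : R :=
  \int[mu]_(x2 in `[0, 1]) torus_int_x3 g s x1 x2.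
Definition torus_int (g : V -> R) (s : R) : R :=
  \int[mu]_(x1 in `[0, 1]) torus_int_x23 g s x1.

Lemma near01W (x : R) : -1 < x < 2 -> -1 <= x <= 2.
Proof. by move=> /andP[x1 x2]; rewrite !ltW. Qed.

Lemma itv01_near01 (x : R) : 0 <= x <= 1 -> -1 <= x <= 2.
Proof. by move=> /andP[x0 x1]; apply/andP; split; lra. Qed.

Section ContinuousIntegrand.
Variable g : V -> R.
Hypothesis cg : continuous g.

Lemma integrable_x3 (s x1 x2 : R) :
  mu.-integrable `[0, 1] (EFin \o (fun x3 => g (pt4 s x1 x2 x3))).
Proof. exact/integrable01/continuous_pt4_3. Qed.

Lemma torus_int_x3_bounded (s : R) : exists M, forall x1 x2,
  -1 <= x1 <= 2 -> -1 <= x2 <= 2 -> `|torus_int_x3 g s x1 x2| <= M.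
Proof.
have [M HM] := continuous_pt4_bounded s cg.
exists M => x1 x2 h1 h2; apply: integral01_norm_le; first exact: integrable_x3.
by move=> y /itv01_near01; exact: HM.
Qed.

Lemma torus_int_x3_continuous2 (s x1 x2 : R) : -1 <= x1 <= 2 -> -1 < x2 < 2 ->
  {for x2, continuous (torus_int_x3 g s x1)}.
Proof.
move=> h1; have [M HM] := continuous_pt4_bounded s cg.
apply: (@param_integral_continuous R (fun x2 x3 => g (pt4 s x1 x2 x3)) M).
- by move=> z _; exact: integrable_x3.
- by move=> z y _ _; exact: continuous_pt4_2.
- by move=> z y /near01W hz /itv01_near01 hy; exact: HM.
Qed.

Lemma torus_int_x3_continuous1 (s x1 x2 : R) : -1 < x1 < 2 -> -1 <= x2 <= 2 ->
  {for x1, continuous (fun x1 => torus_int_x3 g s x1 x2)}.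
Proof.
move=> + h2; have [M HM] := continuous_pt4_bounded s cg.
apply: (@param_integral_continuous R (fun x1 x3 => g (pt4 s x1 x2 x3)) M).
- by move=> z _; exact: integrable_x3.
- by move=> z y _ _; exact: continuous_pt4_1.
- by move=> z y /near01W hz /itv01_near01 hy; exact: HM.
Qed.

Lemma integrable_x2 (s x1 : R) : -1 <= x1 <= 2 ->
  mu.-integrable `[0, 1] (EFin \o torus_int_x3 g s x1).
Proof.
move=> h1; apply/integrable01_within/near01_within_continuous => x2.
exact: torus_int_x3_continuous2.
Qed.

Lemma torus_int_x23_continuous (s x1 : R) : -1 < x1 < 2 ->
  {for x1, continuous (torus_int_x23 g s)}.
Proof.
have [M HM] := torus_int_x3_bounded s.
apply: (@param_integral_continuous R (torus_int_x3 g s) M).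
- by move=> z /near01W; exact: integrable_x2.
- by move=> z y hz /itv01_near01; exact: torus_int_x3_continuous1.
- by move=> z y /near01W hz /itv01_near01; exact: HM.
Qed.

Lemma integrable_x1 (s : R) : mu.-integrable `[0, 1] (EFin \o torus_int_x23 g s).
Proof.
apply/integrable01_within/near01_within_continuous => x1.
exact: torus_int_x23_continuous.
Qed.

End ContinuousIntegrand.

Lemma torus_intB (f g : V -> R) s : continuous f -> continuous g ->
  torus_int (fun x => f x - g x) s = torus_int f s - torus_int g s.
Proof.
move=> cf cg; rewrite /torus_int -RintegralB //; try exact: integrable_x1.
apply: eq_Rintegral => x1; rewrite inE /= in_itv /= => /itv01_near01 h1.
rewrite /torus_int_x23 -RintegralB //; try exact: integrable_x2.
apply: eq_Rintegral => x2 _.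
by rewrite /torus_int_x3 -RintegralB //; exact: integrable_x3.
Qed.

Lemma torus_intD (f g : V -> R) s : continuous f -> continuous g ->
  torus_int (fun x => f x + g x) s = torus_int f s + torus_int g s.
Proof.
move=> cf cg; rewrite /torus_int -RintegralD //; try exact: integrable_x1.
apply: eq_Rintegral => x1; rewrite inE /= in_itv /= => /itv01_near01 h1.
rewrite /torus_int_x23 -RintegralD //; try exact: integrable_x2.
apply: eq_Rintegral => x2 _.
by rewrite /torus_int_x3 -RintegralD //; exact: integrable_x3.
Qed.

Lemma torus_int_sum n (F : 'I_n -> V -> R) s : (forall i, continuous (F i)) ->
  torus_int (fun x => \sum_(i < n) F i x) s = \sum_(i < n) torus_int (F i) s.
Proof.
elim: n F => [|n IH] F cF.
  rewrite big_ord0 /torus_int /torus_int_x23 /torus_int_x3.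
  under eq_Rintegral do under eq_Rintegral do under eq_Rintegral do rewrite big_ord0.
  by rewrite !integral01_cst.
have -> : (fun x => \sum_(i < n.+1) F i x) =
    fun x => \sum_(i < n) F (widen_ord (leqnSn n) i) x + F ord_max x.
  by apply/funext => x; rewrite big_ord_recr.
rewrite torus_intD ?IH ?big_ord_recr //.
by apply: continuous_sum => i; exact: cF.
Qed.

End TorusIntegral.

Section PeriodicDivergence.
Variable R : realType.
Variable F : 'rV[R]_4 -> R.
Hypotheses (CF : Ck (e4 R) 1 F) (perF : periodic_x F).

Let cF : continuous F := Ck_cont CF.

Lemma torus_int_x3_dx3_eq0 s x1 x2 :
  torus_int_x3 ('D_(e4 R (sp 2)) F) s x1 x2 = 0.
Proof.
apply: (@integral01_derive_eq0 R (fun y => F (pt4 s x1 x2 y))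
  (fun y => 'D_(e4 R (sp 2)) F (pt4 s x1 x2 y))).
- by move=> y _; apply: is_derive_pt4_3 => x; exact: Ck_derivable CF.
- by apply: continuous_subspaceT; exact: continuous_pt4_3 (Ck_cont (Ck_D _ CF)).
- by rewrite pt4_line3 scale1r addrC perF.
Qed.

Lemma torus_int_x23_dx2_eq0 s x1 : -1 <= x1 <= 2 ->
  torus_int_x23 ('D_(e4 R (sp 1)) F) s x1 = 0.
Proof.
move=> h1; have [M HM] := continuous_pt4_bounded s (Ck_cont (Ck_D (sp 1) CF)).
apply: (@integral01_derive_eq0 R (torus_int_x3 F s x1)
  (torus_int_x3 ('D_(e4 R (sp 1)) F) s x1)).
- apply: (@param_integral_derive R (fun x2 x3 => F (pt4 s x1 x2 x3))
    (fun x2 x3 => 'D_(e4 R (sp 1)) F (pt4 s x1 x2 x3)) M).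
  + move=> z _; exact: (integrable_x3 cF s x1 z).
  + by move=> z y _ _; apply: is_derive_pt4_2 => x; exact: Ck_derivable CF.
  + by move=> z y /near01W hz /itv01_near01; exact: HM.
- apply: near01_within_continuous => x2.
  exact: torus_int_x3_continuous2 (Ck_cont (Ck_D (sp 1) CF)) s x1 x2 h1.
- by apply: eq_Rintegral => x3 _; rewrite pt4_line2 scale1r addrC perF.
Qed.

Lemma torus_int_dx1_eq0 s : torus_int ('D_(e4 R (sp 0)) F) s = 0.
Proof.
have cD1 := Ck_cont (Ck_D (sp 0) CF).
have [M HM] := torus_int_x3_bounded cD1 s.
have [M' HM'] := continuous_pt4_bounded s cD1.
apply: (@integral01_derive_eq0 R (torus_int_x23 F s)
  (torus_int_x23 ('D_(e4 R (sp 0)) F) s)).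
- apply: (@param_integral_derive R (torus_int_x3 F s)
    (torus_int_x3 ('D_(e4 R (sp 0)) F) s) M).
  + by move=> z /near01W; exact: integrable_x2 cF s z.
  + move=> z x2 hz /itv01_near01 h2.
    apply: (@param_integral_derive R (fun x1 x3 => F (pt4 s x1 x2 x3))
      (fun x1 x3 => 'D_(e4 R (sp 0)) F (pt4 s x1 x2 x3)) M') => //.
    * by move=> w _; exact: integrable_x3 cF s w x2.
    * by move=> w y _ _; apply: is_derive_pt4_1 => x; exact: Ck_derivable CF.
    * by move=> w y /near01W hw /itv01_near01; exact: HM'.
  + by move=> z y /near01W hz /itv01_near01; exact: HM.
- apply: near01_within_continuous => x1.
  exact: torus_int_x23_continuous cD1 s x1.
- apply: eq_Rintegral => x2 _; apply: eq_Rintegral => x3 _.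
  by rewrite pt4_line1 scale1r addrC perF.
Qed.

Lemma torus_int_dx_eq0 (j : 'I_3) s : torus_int ('D_(e4 R (sp j)) F) s = 0.
Proof.
case: j => -[|[|[|//]]] Hj.
- by rewrite (_ : Ordinal Hj = 0); [exact: torus_int_dx1_eq0 | exact: val_inj].
- rewrite (_ : Ordinal Hj = 1); last exact: val_inj.
  rewrite /torus_int -[RHS](integral01_cst 0); apply: eq_Rintegral => x1.
  by rewrite inE /= in_itv /= => /itv01_near01; exact: torus_int_x23_dx2_eq0.
- rewrite (_ : Ordinal Hj = 2); last exact: val_inj.
  rewrite /torus_int -[RHS](integral01_cst 0); apply: eq_Rintegral => x1 _.
  rewrite /torus_int_x23 -[RHS](integral01_cst 0); apply: eq_Rintegral => x2 _.
  exact: torus_int_x3_dx3_eq0.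
Qed.

End PeriodicDivergence.

Section CauchySchwarz.
Variables (R : realFieldType) (I : finType).

Lemma sum_mul_sqr_le (a b : I -> R) :
  (\sum_p a p * b p) ^+ 2 <= (\sum_p a p ^+ 2) * \sum_p b p ^+ 2.
Proof.
set A := \sum_p a p ^+ 2; set B := \sum_p b p ^+ 2; set C := \sum_p a p * b p.
have inner p : \sum_q (a p * b q - a q * b p) ^+ 2 =
    a p ^+ 2 * B + b p ^+ 2 * A - 2 * (a p * b p) * C.
  rewrite /A /B /C !mulr_sumr -big_split -sumrB /=.
  by apply: eq_bigr => q _; ring.
have : 0 <= \sum_p \sum_q (a p * b q - a q * b p) ^+ 2.
  by apply: sumr_ge0 => p _; apply: sumr_ge0 => q _; exact: sqr_ge0.
rewrite (eq_bigr _ (fun p _ => inner p)) sumrB big_split /= -!mulr_suml.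
by rewrite -/A -/B -mulr_sumr -/C => ?; nra.
Qed.

End CauchySchwarz.

Section SymmetrizedSums.
Variables (R : realFieldType) (I : finType) (s : I -> I).
Hypothesis sK : involutive s.

Lemma sum_mul_symmetrize (X c : I -> R) : (forall p, X (s p) = X p) ->
  \sum_p X p * c p = \sum_p X p * ((c p + c (s p)) / 2).
Proof.
move=> Xs; have Ecs : \sum_p X p * c (s p) = \sum_p X p * c p.
  rewrite [RHS](reindex_inj (inv_inj sK)) /=.
  by apply: eq_bigr => p _; rewrite Xs.
rewrite [RHS](eq_bigr (fun p => X p * c p / 2 + X p * c (s p) / 2)).
  by rewrite big_split /= -!mulr_suml Ecs; field.
by move=> p _; field.
Qed.

End SymmetrizedSums.

Lemma rate_form_ge0 (R : realFieldType) (I : finType) (a b : I -> R) (beta r B : R) :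
  0 <= beta -> -1 <= 2 * r -> \sum_p a p ^+ 2 <= B ->
  0 <= \sum_p (beta * B * b p + beta * r * (2 * \sum_q a q * b q) * a p) * b p.
Proof.
move=> beta0 r1 aB.
set C := \sum_q a q * b q; set Sb := \sum_p b p ^+ 2.
have -> : \sum_p (beta * B * b p + beta * r * (2 * C) * a p) * b p =
    beta * (B * Sb + 2 * r * C ^+ 2).
  rewrite (eq_bigr (fun p => beta * B * b p ^+ 2 + beta * r * (2 * C) * (a p * b p))).
    by rewrite big_split /= -!mulr_sumr -/Sb -/C; ring.
  by move=> p _; ring.
have CS := sum_mul_sqr_le a b; rewrite -/C -/Sb in CS.
have Sb0 : 0 <= Sb by apply: sumr_ge0 => p _; exact: sqr_ge0.
have C0 : 0 <= C ^+ 2 by exact: sqr_ge0.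
apply: mulr_ge0 => //; nra.
Qed.

Section SmoothPeriodic.
Variable R : realType.
Local Notation V := 'rV[R]_4.

Lemma Dseq_rcons (vs : seq V) (v : V) (f : V -> R) :
  Dseq vs ('D_v f) = Dseq (rcons vs v) f.
Proof. by elim: vs => //= w vs ->. Qed.

Lemma smooth_derive (f : V -> R) (v : V) : smooth f -> smooth ('D_v f).
Proof. by move=> sf vs; rewrite Dseq_rcons; exact: sf. Qed.

Lemma smooth_Ck n (f : V -> R) : smooth f -> Ck (e4 R) n f.
Proof.
elim: n f => [|n IH] f sf; first exact: (sf [::]).1.
split=> [|k]; first exact: (sf [::]).1.
split=> [x|]; first exact: (sf [::]).2.
exact/IH/smooth_derive.
Qed.

Lemma periodic_x_derive (f : V -> R) (v : V) : periodic_x f -> periodic_x ('D_v f).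
Proof.
move=> pf j x; rewrite /derive.
have -> : (fun h : R => h^-1 *: ((f \o shift (x + e4 R (sp j))) (h *: v)
    - f (x + e4 R (sp j)))) = (fun h : R => h^-1 *: ((f \o shift x) (h *: v) - f x)).
  by apply/funext => h /=; rewrite addrA !pf.
by [].
Qed.

End SmoothPeriodic.

Lemma symgradC (R : realType) (u : 'I_3 -> 'rV[R]_4 -> R) i j :
  symgrad u i j = symgrad u j i.
Proof. by apply/funext => x; rewrite /symgrad addrC. Qed.

Section StressRate.
Variables (R : realType) (delta q : R) (u : 'I_3 -> 'rV[R]_4 -> R).
Hypotheses (delta0 : 0 < delta) (su : forall i, smooth (u i)).
Local Notation V := 'rV[R]_4.
Local Notation C := (Ck (e4 R)).
Local Notation B := (Bfun delta u).
Local Notation r := ((q - 2) / 2).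

Let Cu n i : C n (u i) := smooth_Ck n (su i).

Lemma symgrad_Ck n i j : C n (symgrad u i j).
Proof.
apply: Ck_mul; last exact: Ck_cst.
by apply: Ck_add; apply: Ck_D; exact: Cu.
Qed.

Lemma Bfun_Ck n : C n B.
Proof.
apply: Ck_add; last exact: Ck_cst.
apply: Ck_sum => i; apply: Ck_sum => j.
by rewrite (_ : (fun x => _) = fun x => symgrad u i j x * symgrad u i j x);
  [apply: Ck_mul; exact: symgrad_Ck | apply/funext => x; rewrite expr2].
Qed.

Lemma Bfun_gt0 x : 0 < B x.
Proof.
rewrite /Bfun ltr_wpDl ?exprn_gt0 //.
by apply: sumr_ge0 => i _; apply: sumr_ge0 => j _; exact: sqr_ge0.
Qed.

Lemma stress_Ck n i j : C n (stress delta q u i j).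
Proof.
apply: Ck_mul; last exact: symgrad_Ck.
by apply: Ck_powR; [exact: Bfun_gt0 | exact: Bfun_Ck].
Qed.

Lemma dt_symgrad i j x :
  dt (symgrad u i j) x = (dx j (dt (u i)) x + dx i (dt (u j)) x) / 2.
Proof.
have dD k l : derivable (dx l (u k)) x (e4 R ord0).
  by apply: Ck_derivable; apply: Ck_D; exact: Cu 2 k.
rewrite /dt /symgrad deriveM ?deriveD ?derive_cst ?scaler0 ?add0r //; last first.
  exact: derivableD.
have comm k l : 'D_(e4 R ord0) ('D_(e4 R (sp l)) (u k)) x =
    'D_(e4 R (sp l)) ('D_(e4 R ord0) (u k)) x.
  exact: (congr1 (fun f => f x) (Ck_derive_comm (sp l) ord0 (Cu 2 k))).
by rewrite /GRing.scale /= mulrC /dx (comm i j) (comm j i).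
Qed.

Lemma dt_Bfun x :
  dt B x = 2 * \sum_i \sum_j symgrad u i j x * dt (symgrad u i j) x.
Proof.
have dS i j : derivable (symgrad u i j) x (e4 R ord0).
  exact: Ck_derivable (symgrad_Ck 1 i j).
have DB : is_derive x (e4 R ord0) B
    (\sum_i \sum_j 2 * symgrad u i j x * dt (symgrad u i j) x + 0).
  have DS : is_derive x (e4 R ord0) (symgrad_norm2 u)
      (\sum_i \sum_j 2 * symgrad u i j x * dt (symgrad u i j) x).
    apply: is_derive_sum_apply => i; apply: is_derive_sum_apply => j.
    exact: is_derive_sqr.
  exact: is_deriveD DS (is_derive_cst (delta ^+ 2) x _).
rewrite /dt DB.(derive_val) addr0 mulr_sumr.
by apply: eq_bigr => i _; rewrite mulr_sumr; apply: eq_bigr => j _; rewrite mulrA.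
Qed.

Lemma dt_stress i j x : dt (stress delta q u i j) x =
  B x `^ (r - 1) * B x * dt (symgrad u i j) x +
  B x `^ (r - 1) * r * dt B x * symgrad u i j x.
Proof.
have DBr : is_derive x (e4 R ord0) (fun y => B y `^ r) (r * B x `^ (r - 1) * dt B x).
  apply: (is_derive_comp1 (phi := fun y => y `^ r) (dphi := fun y => r * y `^ (r - 1))).
    exact: Ck_derivable (Bfun_Ck 1).
  exact/is_derive1_powR/Bfun_gt0.
rewrite /dt /stress deriveM; first last.
- exact: Ck_derivable (symgrad_Ck 1 i j).
- exact: DBr.(ex_derive).
have -> : B x `^ r = B x `^ (r - 1) * B x.
  rewrite -[in LHS](subrK 1 r) powRD ?powRr1 ?(ltW (Bfun_gt0 x)) //.
  by apply/implyP => _; exact: lt0r_neq0 (Bfun_gt0 x).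
by rewrite DBr.(derive_val) /GRing.scale /= /dt; ring.
Qed.

Definition dissipation (x : V) : R :=
  \sum_i \sum_j dt (stress delta q u i j) x * dx j (dt (u i)) x.

Lemma dissipation_ge0 x : 1 <= q -> 0 <= dissipation x.
Proof.
move=> q1.
pose a (p : 'I_3 * 'I_3) := symgrad u p.1 p.2 x.
pose b (p : 'I_3 * 'I_3) := dt (symgrad u p.1 p.2) x.
pose c (p : 'I_3 * 'I_3) := dx p.2 (dt (u p.1)) x.
pose beta := B x `^ (r - 1).
pose T p := beta * B x * b p + beta * r * (2 * \sum_p a p * b p) * a p.
have swapK : involutive (fun p : 'I_3 * 'I_3 => (p.2, p.1)) by case.
(* T is symmetric, so only the symmetric part b of c pairs with it. *)
have -> : dissipation x = \sum_p T p * c p.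
  rewrite /dissipation pair_bigA; apply: eq_bigr => -[i j] _.
  by rewrite dt_stress dt_Bfun pair_bigA.
rewrite (sum_mul_symmetrize swapK) => [|[i j]]; last first.
  by rewrite /T /a /b /= symgradC.
rewrite (eq_bigr (fun p => T p * b p)) => [|[i j] _]; last first.
  by rewrite /b /c /= dt_symgrad.
apply: rate_form_ge0; first exact: powR_ge0.
- by rewrite mulrC divfK ?pnatr_eq0 //; lra.
- by rewrite /Bfun /symgrad_norm2 pair_bigA lerDl sqr_ge0.
Qed.

End StressRate.

Section EnergyIdentity.
Variables (R : realType) (delta q : R) (u : 'I_3 -> 'rV[R]_4 -> R).
Hypotheses (delta0 : 0 < delta) (su : forall i, smooth (u i)).
Local Notation V := 'rV[R]_4.
Local Notation C := (Ck (e4 R)).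

Definition flux (i j : 'I_3) (x : V) : R := dt (u i) x * dt (stress delta q u i j) x.

Let Cu n i : C n (u i) := smooth_Ck n (su i).

Lemma flux_Ck n i j : C n (flux i j).
Proof. by apply: Ck_mul; apply: Ck_D; [exact: Cu | exact: stress_Ck]. Qed.

Lemma dissipation_Ck n : C n (dissipation delta q u).
Proof.
apply: Ck_sum => i; apply: Ck_sum => j.
by apply: Ck_mul; do ?apply: Ck_D; [exact: stress_Ck | exact: Cu].
Qed.

Lemma Jintegrand_split x : Jintegrand delta q u x =
  dissipation delta q u x - \sum_i \sum_j dx j (flux i j) x.
Proof.
have dt_div i : dt (div_stress delta q u i) x =
    \sum_j dx j (dt (stress delta q u i j)) x.
  have DS : is_derive x (e4 R ord0) (div_stress delta q u i)
      (\sum_j dt (dx j (stress delta q u i j)) x).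
    apply: is_derive_sum_apply => j; apply: derivableP; apply: Ck_derivable.
    exact: Ck_D _ (stress_Ck q delta0 su 2 i j).
  rewrite /dt DS.(derive_val); apply: eq_bigr => j _.
  have CS := stress_Ck q delta0 su 2 i j.
  exact: (congr1 (fun f => f x) (Ck_derive_comm (sp j) ord0 CS)).
have dx_flux i j : dx j (flux i j) x =
    dt (u i) x * dx j (dt (stress delta q u i j)) x +
    dt (stress delta q u i j) x * dx j (dt (u i)) x.
  have dU : derivable (dt (u i)) x (e4 R (sp j)).
    exact: Ck_derivable (Ck_D _ (Cu 2 i)).
  have dS : derivable (dt (stress delta q u i j)) x (e4 R (sp j)).
    exact: Ck_derivable (Ck_D _ (stress_Ck q delta0 su 2 i j)).
  exact: deriveM dU dS.
rewrite /Jintegrand /dissipation -sumrB -sumrN; apply: eq_bigr => i _.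
rewrite dt_div mulr_sumr -sumrB -sumrN; apply: eq_bigr => j _.
by rewrite dx_flux opprD addrCA subrr addr0.
Qed.

End EnergyIdentity.

Section StressPeriodic.
Variables (R : realType) (delta q : R) (u : 'I_3 -> 'rV[R]_4 -> R).
Hypothesis pu : forall i, periodic_x (u i).

Lemma periodic_symgrad i j : periodic_x (symgrad u i j).
Proof. by move=> k x; rewrite /symgrad /dx !periodic_x_derive. Qed.

Lemma periodic_Bfun : periodic_x (Bfun delta u).
Proof.
move=> k x; congr (_ + _); apply: eq_bigr => i _; apply: eq_bigr => j _.
by rewrite (periodic_symgrad i j).
Qed.

Lemma periodic_stress i j : periodic_x (stress delta q u i j).
Proof. by move=> k x; rewrite /stress periodic_Bfun (periodic_symgrad i j). Qed.

Lemma periodic_flux i j : periodic_x (flux delta q u i j).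
Proof.
move=> k x; rewrite /flux /dt (periodic_x_derive _ (pu i)).
by rewrite (periodic_x_derive _ (periodic_stress i j)).
Qed.

End StressPeriodic.

Theorem lemma4p1 (R : realType) (delta q t : R) (u : 'I_3 -> 'rV[R]_4 -> R) :
  0 < delta -> 1 <= q -> 0 < t ->
  (forall i, smooth (u i)) ->
  (forall i, periodic_x (u i)) ->
  0 <= Jval delta q t u.
Proof.
move=> delta0 q1 _ su pu.
apply: Rintegral_ge0 => s _; change (0 <= torus_int (Jintegrand delta q u) s).
have -> : Jintegrand delta q u = fun x => dissipation delta q u x -
    \sum_i \sum_j dx j (flux delta q u i j) x.
  by apply/funext => x; exact: Jintegrand_split.
have cdiv i j : continuous (dx j (flux delta q u i j)).
  exact: Ck_cont (Ck_D _ (flux_Ck q delta0 su 1 i j)).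
have cdiv_sum i : continuous (fun x => \sum_j dx j (flux delta q u i j) x).
  exact: continuous_sum.
rewrite torus_intB; first last.
- exact: continuous_sum.
- exact: Ck_cont (dissipation_Ck q delta0 su 0).
rewrite [X in _ - X]torus_int_sum // big1 ?subr0 => [|i _].
  apply: Rintegral_ge0 => x1 _; apply: Rintegral_ge0 => x2 _.
  by apply: Rintegral_ge0 => x3 _; exact: dissipation_ge0.
rewrite torus_int_sum // big1 // => j _.
by apply: torus_int_dx_eq0; [exact: flux_Ck | exact: periodic_flux].
Qed.
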